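(* In every T2R semigroup $S=S_0\cup S_1$, we have $S_0^2=S_0$.
   Context: A semigroup $S$ is a $\Delta$-semigroup if the lattice of all congruences of $S$ is a chain with respect to inclusion. A semigroup $N$ with zero $0$ is nil if every element has some power equal to $0$; non-trivial means having more than one element. A T2R semigroup is a $\Delta$-semigroup $S$ which is the disjoint union of a non-trivial nil ideal $S_0$ (with zero $0$, which is then the zero of $S$) and a subsemigroup $S_1=\{u,v\}$, $u\neq v$, which is a right zero semigroup ($xy=y$ for $x,y\in S_1$). $S_0^2=\{xy:x,y\in S_0\}$. *)

From Stdlib Require Import Arith.

Section SemigroupDefs.
Context {T : Type} (op : T -> T -> T).

Definition associative_op : Prop :=
  forall x y z : T, op x (op y z) = op (op x y) z.

Definition is_congruence (r : T -> T -> Prop) : Prop :=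
  (forall x, r x x) /\
  (forall x y, r x y -> r y x) /\
  (forall x y z, r x y -> r y z -> r x z) /\
  (forall x y z, r x y -> r (op z x) (op z y)) /\
  (forall x y z, r x y -> r (op x z) (op y z)).

Definition delta_semigroup : Prop :=
  associative_op /\
  forall r s : T -> T -> Prop, is_congruence r -> is_congruence s ->
    (forall x y, r x y -> s x y) \/ (forall x y, s x y -> r x y).

(* Positive powers: spow x n = x^(n+1). *)
Fixpoint spow (x : T) (n : nat) : T :=
  match n with
  | O => x
  | S n' => op x (spow x n')
  end.

Definition T2R (S0 : T -> Prop) (z u v : T) : Prop :=
  delta_semigroup /\
  (forall x y, S0 x -> S0 (op x y)) /\
  (forall x y, S0 y -> S0 (op x y)) /\
  S0 z /\ (forall x, S0 x -> op z x = z /\ op x z = z) /\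
  (forall x, S0 x -> exists n, spow x n = z) /\
  (exists x, S0 x /\ x <> z) /\
  (* S1 = {u, v} is a two-element right zero semigroup *)
  u <> v /\
  op u u = u /\ op u v = v /\ op v u = u /\ op v v = v /\
  (forall x, S0 x \/ x = u \/ x = v) /\
  ~ S0 u /\ ~ S0 v.

End SemigroupDefs.

(* All congruences of S form a chain.  The Rees congruence of S0 does not
   identify u and v, so every congruence identifying u and v contains it, i.e.
   identifies each element of S0 with the zero z (S0_collapses).  We exploit
   this with two families of congruences that identify u and v:
   - for a suitable ideal P ⊆ S0, the relation with classes {u, v}, P and
     singletons (S1_P_congruence), which yields S0 ⊆ P (ideal_absorbs_S0);
   - for a suitable ideal Q ⊇ S0², the relation comparing elements of S0
     through their right translates by u (shifted_congruence), which yields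
     c·u ∈ Q for all c ∈ S0 (right_u_absorbed).
   Applying both first to Q = P = {y ∈ S0 | y ∈ S0² or u·y = y} shows that
   every a ∈ S0 lies in S0² or is fixed by u, and then to Q = P = S0² gives
   S0 ⊆ S0². *)

Section T2RSemigroup.

Variables (T : Type) (op : T -> T -> T) (S0 : T -> Prop) (z u v : T).

Local Notation "x ⋅ y" := (op x y) (at level 40, left associativity).

Hypothesis assoc : associative_op op.
Hypothesis congruence_chain : forall r s : T -> T -> Prop,
  is_congruence op r -> is_congruence op s ->
  (forall x y, r x y -> s x y) \/ (forall x y, s x y -> r x y).
Hypothesis S0_mulr : forall x y, S0 x -> S0 (x ⋅ y).
Hypothesis S0_mull : forall x y, S0 y -> S0 (x ⋅ y).
Hypothesis S0_z : S0 z.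
Hypothesis z_mull : forall x, S0 x -> z ⋅ x = z.
Hypothesis u_neq_v : u <> v.
Hypothesis uu : u ⋅ u = u.
Hypothesis uv : u ⋅ v = v.
Hypothesis vu : v ⋅ u = u.
Hypothesis vv : v ⋅ v = v.
Hypothesis S_cover : forall x, S0 x \/ x = u \/ x = v.
Hypothesis u_notin_S0 : ~ S0 u.
Hypothesis v_notin_S0 : ~ S0 v.

Definition S1 (a : T) : Prop := a = u \/ a = v.

Lemma S1_rz : forall a b, S1 a -> S1 b -> a ⋅ b = b.
Proof. intros a b [-> | ->] [-> | ->]; assumption. Qed.

Lemma S1_not_S0 : forall a, S1 a -> ~ S0 a.
Proof. intros a [-> | ->]; assumption. Qed.

Lemma S0_or_S1 : forall c, S0 c \/ S1 c.
Proof. intros c. destruct (S_cover c) as [H | H]; [left | right]; exact H. Qed.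

Lemma z_mul_u : z ⋅ u = z.
Proof.
  rewrite <- (z_mull z S0_z) at 1. rewrite <- assoc.
  apply z_mull, S0_mulr, S0_z.
Qed.

Lemma S1_mul_fixed : forall w c, S1 w -> u ⋅ (w ⋅ c) = w ⋅ c.
Proof. intros w c Hw. rewrite assoc, (S1_rz u w); [reflexivity | left; reflexivity | exact Hw]. Qed.

Lemma fixed_by_S1 : forall w y, S1 w -> u ⋅ y = y -> w ⋅ y = y.
Proof.
  intros w y Hw Hy. rewrite <- Hy at 1.
  rewrite assoc, (S1_rz w u); [exact Hy | exact Hw | left; reflexivity].
Qed.

Lemma mul_S1_u : forall x w, S1 w -> x ⋅ w ⋅ u = x ⋅ u.
Proof. intros x w Hw. rewrite <- assoc, (S1_rz w u); [reflexivity | exact Hw | left; reflexivity]. Qed.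

Lemma rees_S0_congruence : is_congruence op (fun a b => a = b \/ (S0 a /\ S0 b)).
Proof.
  repeat split.
  - intros x. left. reflexivity.
  - intros x y [<- | [Hx Hy]]; [left | right]; auto.
  - intros x y w [<- | [Hx Hy]] [<- | [Hy' Hw]]; auto.
  - intros x y c [<- | [Hx Hy]]; [left | right]; auto.
  - intros x y c [<- | [Hx Hy]]; [left | right]; auto.
Qed.

(* Since congruences form a chain and the Rees congruence of S0 separates u
   and v, a congruence identifying u and v collapses S0 onto z. *)
Lemma S0_collapses : forall r, is_congruence op r -> r u v -> forall a, S0 a -> r a z.
Proof.
  intros r Hr Huv a Ha.
  destruct (congruence_chain r _ Hr rees_S0_congruence) as [Hsub | Hsub].
  - destruct (Hsub u v Huv) as [E | [Hu _]]; contradiction.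
  - apply Hsub. right. auto.
Qed.

Definition ideal (P : T -> Prop) : Prop := forall c a, P a -> P (c ⋅ a) /\ P (a ⋅ c).

Lemma ideal_mull : forall P, ideal P -> forall c a, P a -> P (c ⋅ a).
Proof. intros P HP c a Ha. exact (proj1 (HP c a Ha)). Qed.

Lemma ideal_mulr : forall P, ideal P -> forall c a, P a -> P (a ⋅ c).
Proof. intros P HP c a Ha. exact (proj2 (HP c a Ha)). Qed.

Definition balanced (P : T -> Prop) (c : T) : Prop :=
  u ⋅ c = v ⋅ c \/ (P (u ⋅ c) /\ P (v ⋅ c)).

Lemma balanced_S1 : forall P c a b, balanced P c -> S1 a -> S1 b ->
  a ⋅ c = b ⋅ c \/ (P (a ⋅ c) /\ P (b ⋅ c)).
Proof.
  intros P c a b [E | [Hu Hv]] [-> | ->] [-> | ->]; auto.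
Qed.

Section IdealAbsorbsS0.

Variable P : T -> Prop.
Hypothesis P_ideal : ideal P.
Hypothesis P_sub_S0 : forall a, P a -> S0 a.
Hypothesis P_z : P z.
Hypothesis P_mul_u : forall c, S0 c -> P (c ⋅ u).
Hypothesis P_balanced : forall c, S0 c -> balanced P c.

(* Right multiples of S0 by S1 lie in P (c·v = (c·u)·v). *)
Lemma P_mul_S1 : forall c w, S0 c -> S1 w -> P (c ⋅ w).
Proof.
  intros c w Hc [-> | ->]; [auto |].
  rewrite <- uv, assoc. apply ideal_mulr, P_mul_u; assumption.
Qed.

Lemma S1_P_congruence :
  is_congruence op (fun a b => a = b \/ (S1 a /\ S1 b) \/ (P a /\ P b)).
Proof.
  assert (disj : forall a, S1 a -> P a -> False)
    by (intros a H1 HP; exact (S1_not_S0 a H1 (P_sub_S0 a HP))).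
  repeat split.
  - intros x. left. reflexivity.
  - intros x y [<- | [[Hx Hy] | [Hx Hy]]]; auto.
  - intros x y w [<- | [[Hx Hy] | [Hx Hy]]] [<- | [[Hy' Hw] | [Hy' Hw]]]; auto;
      exfalso; eauto.
  - intros x y c [<- | [[Hx Hy] | [Hx Hy]]]; [left; reflexivity | |].
    + destruct (S0_or_S1 c) as [Hc | Hc].
      * right. right. split; apply P_mul_S1; assumption.
      * rewrite (S1_rz c x Hc Hx), (S1_rz c y Hc Hy). auto.
    + right. right. split; apply ideal_mull; assumption.
  - intros x y c [<- | [[Hx Hy] | [Hx Hy]]]; [left; reflexivity | |].
    + destruct (S0_or_S1 c) as [Hc | Hc].
      * destruct (balanced_S1 P c x y (P_balanced c Hc) Hx Hy) as [E | HP]; auto.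
      * rewrite (S1_rz x c Hx Hc), (S1_rz y c Hy Hc). left. reflexivity.
    + right. right. split; apply ideal_mulr; assumption.
Qed.

(* That congruence identifies u and v, so it collapses S0 into the class P of z. *)
Lemma ideal_absorbs_S0 : forall a, S0 a -> P a.
Proof.
  intros a Ha.
  destruct (S0_collapses _ S1_P_congruence (or_intror (or_introl (conj
    (or_introl eq_refl) (or_intror eq_refl)))) a Ha) as [-> | [[_ Hz] | [HP _]]].
  - exact P_z.
  - exfalso. exact (S1_not_S0 z Hz S0_z).
  - exact HP.
Qed.

End IdealAbsorbsS0.

Definition square (x : T) : Prop := exists y w, S0 y /\ S0 w /\ x = y ⋅ w.

Lemma square_S0 : forall a, square a -> S0 a.
Proof. intros a (y & w & Hy & Hw & ->). auto. Qed.

Lemma square_ideal : ideal square.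
Proof.
  intros c a (y & w & Hy & Hw & ->). split.
  - exists (c ⋅ y), w. rewrite assoc. auto.
  - exists y, (w ⋅ c). rewrite assoc. auto.
Qed.

Lemma square_z : square z.
Proof. exists z, z. rewrite z_mull; auto. Qed.

Section RightUAbsorbed.

Variable Q : T -> Prop.
Hypothesis Q_ideal : ideal Q.
Hypothesis square_sub_Q : forall a, square a -> Q a.
Hypothesis Q_balanced : forall c, S0 c -> balanced Q (c ⋅ u).

Lemma shifted_congruence :
  is_congruence op (fun a b => a = b \/ (S1 a /\ S1 b) \/
    (S0 a /\ S0 b /\ (a ⋅ u = b ⋅ u \/ (Q (a ⋅ u) /\ Q (b ⋅ u))))).
Proof.
  repeat split.
  - intros x. left. reflexivity.
  - intros x y [<- | [[Hx Hy] | (Hx & Hy & Hxy)]]; [left; reflexivity | right; left; auto |].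
    right. right. split; [exact Hy | split; [exact Hx |]].
    destruct Hxy as [E | [Qx Qy]]; [left; symmetry; exact E | right; auto].
  - intros x y w [<- | [[Hx Hy] | (Hx & Hy & Hxy)]]
      [<- | [[Hy' Hw] | (Hy' & Hw & Hyw)]]; auto.
    + exfalso. exact (S1_not_S0 y Hy Hy').
    + exfalso. exact (S1_not_S0 y Hy' Hy).
    + right. right. split; [exact Hx | split; [exact Hw |]].
      destruct Hxy as [E1 | [Q1 Q2]], Hyw as [E2 | [Q3 Q4]].
      * left. congruence.
      * right. rewrite E1. auto.
      * right. rewrite <- E2. auto.
      * right. auto.
  - intros x y c [<- | [[Hx Hy] | (Hx & Hy & Hxy)]]; [left; reflexivity | |].
    + destruct (S0_or_S1 c) as [Hc | Hc].
      * right. right. rewrite (mul_S1_u c x Hx), (mul_S1_u c y Hy). auto.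
      * rewrite (S1_rz c x Hc Hx), (S1_rz c y Hc Hy). auto.
    + right. right. split; [auto | split; [auto |]]. rewrite <- !assoc.
      destruct Hxy as [E | [Qx Qy]]; [left; congruence | right; split; apply ideal_mull; assumption].
  - intros x y c [<- | [[Hx Hy] | (Hx & Hy & Hxy)]]; [left; reflexivity | |].
    + destruct (S0_or_S1 c) as [Hc | Hc].
      * right. right. split; [auto | split; [auto |]]. rewrite <- !assoc.
        exact (balanced_S1 Q (c ⋅ u) x y (Q_balanced c Hc) Hx Hy).
      * rewrite (S1_rz x c Hx Hc), (S1_rz y c Hy Hc). left. reflexivity.
    + right. right. split; [auto | split; [auto |]].
      destruct (S0_or_S1 c) as [Hc | Hc].
      * right. rewrite <- !assoc.
        split; apply square_sub_Q; [exists x, (c ⋅ u) | exists y, (c ⋅ u)]; auto.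
      * rewrite (mul_S1_u x c Hc), (mul_S1_u y c Hc). exact Hxy.
Qed.

(* That congruence identifies u and v, so c ~ z, whence c·u = z ∈ Q or c·u ∈ Q. *)
Lemma right_u_absorbed : forall c, S0 c -> Q (c ⋅ u).
Proof.
  assert (Qz : Q z) by exact (square_sub_Q z square_z).
  intros c Hc.
  destruct (S0_collapses _ shifted_congruence (or_intror (or_introl (conj
    (or_introl eq_refl) (or_intror eq_refl)))) c Hc)
    as [-> | [[_ Hz] | (_ & _ & [E | [Qc _]])]].
  - rewrite z_mul_u. exact Qz.
  - exfalso. exact (S1_not_S0 z Hz S0_z).
  - rewrite E, z_mul_u. exact Qz.
  - exact Qc.
Qed.

End RightUAbsorbed.

Definition square_or_fixed (y : T) : Prop := S0 y /\ (square y \/ u ⋅ y = y).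

Lemma square_or_fixed_ideal : ideal square_or_fixed.
Proof.
  intros c a [Ha Hsf]. split; split; auto.
  - destruct Hsf as [Hsq | Hfix]; [left; exact (ideal_mull _ square_ideal c a Hsq) |].
    destruct (S0_or_S1 c) as [Hc | Hc].
    + left. exists c, a. auto.
    + right. apply S1_mul_fixed, Hc.
  - destruct Hsf as [Hsq | Hfix]; [left; exact (ideal_mulr _ square_ideal c a Hsq) |].
    right. rewrite assoc, Hfix. reflexivity.
Qed.

(* For c ∈ S0 both u·c and v·c are fixed by u. *)
Lemma square_or_fixed_balanced : forall c, S0 c -> balanced square_or_fixed c.
Proof.
  intros c Hc. right.
  split; split; auto; right; apply S1_mul_fixed; [left | right]; reflexivity.
Qed.

Lemma S0_square_or_fixed : forall a, S0 a -> square a \/ u ⋅ a = a.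
Proof.
  intros a Ha.
  enough (Ha' : square_or_fixed a) by exact (proj2 Ha').
  apply ideal_absorbs_S0; [| | | | | exact Ha].
  - exact square_or_fixed_ideal.
  - intros b [Hb _]. exact Hb.
  - split; [exact S0_z | left; exact square_z].
  - apply right_u_absorbed.
    + exact square_or_fixed_ideal.
    + intros b Hb. split; [apply square_S0, Hb | left; exact Hb].
    + intros c Hc. apply square_or_fixed_balanced. auto.
  - exact square_or_fixed_balanced.
Qed.

(* Hence u and v act alike on S0 modulo S0²: on u-fixed elements they agree. *)
Lemma square_balanced : forall c, S0 c -> balanced square c.
Proof.
  intros c Hc.
  destruct (S0_square_or_fixed c Hc) as [Hsq | Hfix].
  - right. split; apply (ideal_mull _ square_ideal); exact Hsq.
  - left. rewrite Hfix, (fixed_by_S1 v c); [reflexivity | right; reflexivity | exact Hfix].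
Qed.

Theorem S0_sub_square : forall a, S0 a -> square a.
Proof.
  apply ideal_absorbs_S0.
  - exact square_ideal.
  - exact square_S0.
  - exact square_z.
  - apply right_u_absorbed; auto.
    + exact square_ideal.
    + intros c Hc. apply square_balanced. auto.
  - exact square_balanced.
Qed.

End T2RSemigroup.

Theorem proposition7 (T : Type) (op : T -> T -> T) (S0 : T -> Prop) (z u v : T) :
  T2R op S0 z u v ->
  forall x, S0 x -> exists y w, S0 y /\ S0 w /\ x = op y w.
Proof.
  intros [[assoc chain] (S0_mulr & S0_mull & S0_z & zero & _ & _ & u_neq_v &
    uu & uv & vu & vv & cover & u_notin & v_notin)].
  exact (S0_sub_square T op S0 z u v assoc chain S0_mulr S0_mull S0_z
    (fun x Hx => proj1 (zero x Hx)) u_neq_v uu uv vu vv cover u_notin v_notin).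
Qed.
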